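(* Let $n\ge3$, let $\boldsymbol\ell=(\ell_1,\ldots,\ell_n)$ be positive numbers, let $\mathbf b=(b_1,\ldots,b_n)$ be a vector of offset Kasner exponents, and let $\mu,\tau_0$ be nonzero constants. Then the CMC conformal data set $(g_{\boldsymbol\ell},\mu\,\sigma_{\mathbf b,\boldsymbol\ell},\tau_0)$ on $T^n$ determines (generates exactly one solution of the constraint equations, namely) the Cauchy data of the slice $t=t_0:=1/\tau_0$ of a Kasner spacetime, which is expanding if $\tau_0>0$ and contracting if $\tau_0<0$. Its Kasner exponents are $\mathbf a=s\mathbf b+(\frac1n,\ldots,\frac1n)$, where $s=1$ if $\mu$ and $\tau_0$ have the same sign and $s=-1$ otherwise. The slice $t=t_0$ has metric $c^{q-2}g_{\boldsymbol\ell}$ with $c=|\mu/\tau_0|^{1/q}$, and the slice $t=\mathrm{sgn}(t_0)$ of this spacetime has metric $g_{\bar{\boldsymbol\ell}}$, where $\bar\ell_k=|t_0|^{-a_k}c^{q/2-1}\ell_k$.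
   Context: $q=\frac{2n}{n-2}$, $\kappa=\frac{n-1}{n}$. $T^n=(\mathbb{R}/\mathbb{Z})^n$ with unit coordinates $(s^1,\ldots,s^n)$; $g_{\boldsymbol\ell}=\sum_k\ell_k^2(ds^k)^2$. Offset Kasner exponents: $\mathbf b\in\mathbb{R}^n$ with $\sum_kb_k=0$ and $\sum_kb_k^2=\kappa$. Then $\sigma_{\mathbf b,\boldsymbol\ell}=\sum_kb_k\ell_k^2(ds^k)^2$ is transverse-traceless for $g_{\boldsymbol\ell}$. CMC conformal method: a data set $(g,\sigma,\tau_0)$ ($\sigma$ transverse-traceless, $\tau_0$ constant) generates the solutions $\bar g=\phi^{q-2}g$, $\bar K=\phi^{-2}\sigma+\frac{\tau_0}{n}\bar g$ of the Einstein constraint equations $R_{\bar g}-|\bar K|^2+(\mathrm{tr}\bar K)^2=0$, $\mathrm{div}_{\bar g}\bar K=d\,\mathrm{tr}\bar K$, one for each positive solution $\phi$ of $-2\kappa q\Delta_g\phi+R_g\phi-|\sigma|_g^2\phi^{-q-1}+\kappa\tau_0^2\phi^{q-1}=0$. A Kasner spacetime with exponents $\mathbf a$ ($\sum a_k=1$, $\sum a_k^2=1$) and lengths $\bar{\boldsymbol\ell}$ is $\mathbb{R}_+\times T^n$ (expanding) or $\mathbb{R}_-\times T^n$ (contracting) with metric $-dt^2+\sum_k|t|^{2a_k}\bar\ell_k^2(ds^k)^2$, time-oriented by $\partial_t$. The Cauchy data of a slice $\{t=t_0\}$ is its induced metric and second fundamental form $K(X,Y)=-\langle\partial_t,\nabla_XY\rangle$.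 *)

From HB Require Import structures.
From mathcomp Require Import all_boot all_order all_algebra.
From mathcomp Require Import all_classical all_reals all_analysis.
Set Implicit Arguments. Unset Strict Implicit. Unset Printing Implicit Defensive.
Import Order.TTheory GRing.Theory Num.Theory.
Import numFieldNormedType.Exports.
Local Open Scope ring_scope.

Section Defs.
Variable R : realType.

Definition qexp (n : nat) : R := 2 * n%:R / (n%:R - 2).
Definition kappa (n : nat) : R := (n%:R - 1) / n%:R.

Definition ev (n : nat) (i : 'I_n) : 'rV[R]_n := delta_mx 0 i.

Definition pd (n : nat) (i : 'I_n) (f : 'rV[R]_n -> R) (x : 'rV[R]_n) : R :=
  'D_(ev i) f x.

(* Functions on T^n = (R/Z)^n are Z^n-periodic functions of the unit
   coordinates s = (s^1,...,s^n). *)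
Definition periodic (n : nat) (f : 'rV[R]_n -> R) : Prop :=
  forall (x : 'rV[R]_n) (i : 'I_n), f (x + ev i) = f x.

Definition torus_C2 (n : nat) (f : 'rV[R]_n -> R) : Prop :=
  periodic f /\ continuous f /\
  (forall i x, derivable f x (ev i)) /\
  (forall i, continuous (pd i f)) /\
  (forall i j x, derivable (pd j f) x (ev i)) /\
  (forall i j, continuous (pd i (pd j f))).

(* A symmetric 2-tensor field on T^n in the coordinates s: its matrix of
   components g_{ij}(s). *)
Definition tensor_field (n : nat) := 'rV[R]_n -> 'M[R]_n.

Definition g_len (n : nat) (l : 'I_n -> R) : tensor_field n :=
  fun _ => \matrix_(i, j) (if i == j then l i ^+ 2 else 0).

Definition sigma_bl (n : nat) (b l : 'I_n -> R) : tensor_field n :=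
  fun _ => \matrix_(i, j) (if i == j then b i * l i ^+ 2 else 0).

Definition offset_kasner (n : nat) (b : 'I_n -> R) : Prop :=
  \sum_k b k = 0 /\ \sum_k b k ^+ 2 = kappa n.

Definition kasner_exponents (n : nat) (a : 'I_n -> R) : Prop :=
  \sum_k a k = 1 /\ \sum_k a k ^+ 2 = 1.

Definition ginv (n : nat) (g : tensor_field n) (x : 'rV[R]_n) : 'M[R]_n :=
  invmx (g x).

Definition christoffel (n : nat) (g : tensor_field n) (k i j : 'I_n)
  (x : 'rV[R]_n) : R :=
  \sum_l ginv g x k l / 2 *
    (pd i (fun y => g y l j) x + pd j (fun y => g y l i) x
     - pd l (fun y => g y i j) x).

Definition ricci (n : nat) (g : tensor_field n) (i j : 'I_n) (x : 'rV[R]_n) : R :=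
  \sum_k (pd k (christoffel g k i j) x - pd j (christoffel g k i k) x)
  + \sum_k \sum_l (christoffel g k k l x * christoffel g l i j x
                   - christoffel g k j l x * christoffel g l i k x).

Definition scalar_curv (n : nat) (g : tensor_field n) (x : 'rV[R]_n) : R :=
  \sum_i \sum_j ginv g x i j * ricci g i j x.

Definition laplacian (n : nat) (g : tensor_field n) (phi : 'rV[R]_n -> R)
  (x : 'rV[R]_n) : R :=
  \sum_i \sum_j ginv g x i j *
    (pd i (pd j phi) x - \sum_k christoffel g k i j x * pd k phi x).

Definition tnorm2 (n : nat) (g s : tensor_field n) (x : 'rV[R]_n) : R :=
  \sum_i \sum_j \sum_k \sum_l
    ginv g x i k * ginv g x j l * s x i j * s x k l.

Definition lichnerowicz (n : nat) (g sigma : tensor_field n) (tau0 : R)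
  (phi : 'rV[R]_n -> R) : Prop :=
  forall x, - (2 * kappa n * qexp n) * laplacian g phi x
            + scalar_curv g x * phi x
            - tnorm2 g sigma x * phi x `^ (- qexp n - 1)
            + kappa n * tau0 ^+ 2 * phi x `^ (qexp n - 1) = 0.

Definition conformal_factor (n : nat) (g sigma : tensor_field n) (tau0 : R)
  (phi : 'rV[R]_n -> R) : Prop :=
  [/\ torus_C2 phi, forall x, 0 < phi x & lichnerowicz g sigma tau0 phi].

Definition generated_solution (n : nat) (g sigma : tensor_field n) (tau0 : R)
  (phi : 'rV[R]_n -> R) : tensor_field n * tensor_field n :=
  (fun x => phi x `^ (qexp n - 2) *: g x,
   fun x => (phi x ^+ 2)^-1 *: sigma x
            + (tau0 / n%:R) *: (phi x `^ (qexp n - 2) *: g x)).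

(* ---- Spacetime R x T^n in coordinates (t, s^1, ..., s^n);
   index 0 is t, index lift ord0 k is s^k. ---- *)
Definition st_field (n : nat) := 'rV[R]_n.+1 -> 'M[R]_n.+1.

Definition st_point (n : nat) (t : R) (x : 'rV[R]_n) : 'rV[R]_n.+1 :=
  \row_(i < n.+1) (if unlift ord0 i is Some k then x 0 k else t).

Definition sidx (n : nat) (k : 'I_n) : 'I_n.+1 := lift ord0 k.

Definition christoffel1 (n : nat) (G : st_field n) (mu nu la : 'I_n.+1)
  (p : 'rV[R]_n.+1) : R :=
  (pd nu (fun y => G y mu la) p + pd la (fun y => G y mu nu) p
   - pd mu (fun y => G y nu la) p) / 2.

(* Cauchy data (induced metric, second fundamental form
   K(X,Y) = -<d_t, nabla_X Y>) of the slice {t = t0} *)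
Definition slice_metric (n : nat) (G : st_field n) (t0 : R) : tensor_field n :=
  fun x => \matrix_(j, k) G (st_point t0 x) (sidx j) (sidx k).

Definition slice_sff (n : nat) (G : st_field n) (t0 : R) : tensor_field n :=
  fun x => \matrix_(j, k) - christoffel1 G ord0 (sidx j) (sidx k) (st_point t0 x).

Definition cauchy_data (n : nat) (G : st_field n) (t0 : R)
  : tensor_field n * tensor_field n :=
  (slice_metric G t0, slice_sff G t0).

Definition kasner_metric (n : nat) (a lbar : 'I_n -> R) : st_field n :=
  fun p => \matrix_(mu, nu)
    (if mu == nu then
       (if unlift ord0 mu is Some k then `|p 0 0| `^ (2 * a k) * lbar k ^+ 2
        else -1)
     else 0).

Definition kasner_domain (expanding : bool) (t : R) : Prop :=
  if expanding then 0 < t else t < 0.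

End Defs.

From Pilot Require Import Defs.
From HB Require Import structures.
From mathcomp Require Import all_boot all_order all_algebra.
From mathcomp Require Import all_classical all_reals all_analysis.
Import Order.TTheory GRing.Theory Num.Theory.
Import numFieldNormedType.Exports.
Set Implicit Arguments. Unset Strict Implicit. Unset Printing Implicit Defensive.
Local Open Scope ring_scope.
From mathcomp Require Import ring lra.

(* For the flat metric g_l the scalar curvature vanishes and |mu sigma|^2 = kappa mu^2 is
   constant, so the Lichnerowicz equation becomes
     2 kappa q Delta phi = kappa tau0^2 phi^(-q-1) (phi^(2q) - (mu/tau0)^2).
   The constant c = |mu/tau0|^(1/q) solves it, and it is the only positive solution: at a
   maximum of phi on the compact torus Delta phi <= 0, which forces phi <= c, and dually
   phi >= c at a minimum.  On the other side, the slice {t = t0} of the Kasner metric has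
   induced metric |t0|^(2 a_k) lbar_k^2 = c^(q-2) l_k^2 and second fundamental form
   (a_k / t0) times that metric; as a_k = s b_k + 1/n and mu = s tau0 c^q, this equals
   c^(-2) mu sigma + (tau0/n) c^(q-2) g, the data generated by phi = c. *)

Section PeriodicMaximum.
Variables (R : realType) (n : nat) (f : 'rV[R]_n -> R).
Hypothesis f_periodic : Defs.periodic f.

Lemma periodic_addn (i : 'I_n) (k : nat) x : f (x + k%:R *: ev R i) = f x.
Proof.
elim: k => [|k IHk]; first by rewrite scale0r addr0.
by rewrite -natr1 scalerDl scale1r addrA f_periodic.
Qed.

Lemma periodic_addz (i : 'I_n) (m : int) x : f (x + m%:~R *: ev R i) = f x.
Proof.
case: m => k; first by rewrite -pmulrn periodic_addn.
rewrite NegzE mulrNz scaleNr -[in RHS](subrK (k.+1%:R *: ev R i) x).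
by rewrite periodic_addn.
Qed.

Lemma periodic_translate (m : 'I_n -> int) x :
  f (x + \sum_i (m i)%:~R *: ev R i) = f x.
Proof.
elim: (index_enum _) x => [|i s IHs] x; first by rewrite big_nil addr0.
by rewrite big_cons addrA IHs periodic_addz.
Qed.

Lemma periodic_unit_cube y :
  exists2 z : 'rV[R]_n, forall i, 0 <= z 0 i <= 1 & f z = f y.
Proof.
pose m i := Num.floor (y 0 i).
exists (y - \sum_i (m i)%:~R *: ev R i); last first.
  by rewrite -[in RHS](subrK (\sum_i (m i)%:~R *: ev R i) y) periodic_translate.
move=> i; rewrite !mxE summxE (bigD1 i) //= big1 => [|j /negbTE ji].
  rewrite !mxE !eqxx addr0 mulr1 /m.
  have := floor_le (y 0 i); have := floorD1_gt (y 0 i); rewrite intrD.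
  by move=> *; apply/andP; split; lra.
by rewrite !mxE eq_sym ji andbF mulr0.
Qed.

Lemma periodic_continuous_max : continuous f -> exists xM, forall y, f y <= f xM.
Proof.
move=> f_cont.
pose cube := [set v : 'rV[R]_n | forall i, `[0, 1]%classic (v 0 i)]%classic.
have cube_compact : compact cube.
  by apply: (@rV_compact _ _ (fun=> `[0 : R, 1]%classic)) => _; exact: segment_compact.
have cube0 : (cube !=set0)%classic.
  by exists 0 => i; rewrite /= mxE in_itv /= lexx ler01.
have [xM _ xM_max] := EVT_max_rV cube0 cube_compact (continuous_subspaceT f_cont).
exists xM => y; have [z z_cube <-] := periodic_unit_cube y.
by apply: xM_max; rewrite inE => i /=; rewrite in_itv /=.
Qed.

End PeriodicMaximum.

Section SecondDerivativeTest.
Variable R : realType.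
Local Open Scope classical_set_scope.

Lemma derivative_pos_right_of_critical (h' : R -> R) (d : R) :
  is_derive (0 : R) (1 : R) h' d -> h' 0 = 0 -> 0 < d ->
  exists2 e : R, 0 < e & forall t, 0 < t < e -> 0 < h' t.
Proof.
move=> [dh' <-] h'0 d_gt0.
have quotient_cvg : (fun t : R => t^-1 * h' t) @ 0^' --> 'D_1 h' 0.
  suff <- : (fun t : R => t^-1 *: ((h' \o shift 0) (t *: 1) - h' 0))
          = (fun t : R => t^-1 * h' t) by exact: dh'.
  by apply: funext => t /=; rewrite h'0 subr0 addr0 /GRing.scale /= mulr1.
have half_gt0 : 0 < 'D_1 h' 0 / 2 by lra.
have half_lt : 'D_1 h' 0 / 2 < 'D_1 h' 0 by lra.
have /nbhs_ballP [e /= e_gt0 near0] := cvgr_gt (FF := dnbhs_filter 0) _ quotient_cvg _ half_lt.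
exists e => // t /andP[t_gt0 t_lt_e].
have := near0 t; rewrite /ball /= sub0r normrN gtr0_norm // => /(_ t_lt_e (lt0r_neq0 t_gt0)).
by move=> /(lt_trans half_gt0); rewrite pmulr_rgt0 ?invr_gt0.
Qed.

Lemma second_derivative_le0_at_max (h h' : R -> R) (d : R) :
  (forall t, is_derive t (1 : R) h (h' t)) -> is_derive (0 : R) (1 : R) h' d ->
  (forall t, h t <= h 0) -> d <= 0.
Proof.
move=> dh dh' h_max.
have h_derivable t : derivable h t 1 by have [] := dh t.
have h'0 : h' 0 = 0.
  have zero_in : (0 : R) \in `]-1, 1[%R by rewrite in_itv /= ltrN10 ltr01.
  have m1_le1 : (-1 : R) <= 1 by lra.
  have [_ <-] := dh 0.
  by have [] := derive1_at_max m1_le1 (fun t _ => h_derivable t) zero_in (fun t _ => h_max t).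
rewrite leNgt; apply/negP => /(derivative_pos_right_of_critical dh' h'0) [e e_gt0 h'_pos].
have e2_gt0 : 0 < e / 2 by lra.
have h_cont : continuous h.
  by move=> x; apply: differentiable_continuous; apply/derivable1_diffP.
have h_incr : h 0 < h (e / 2).
  have h'_pos_itv x : x \in `]0, e / 2[%R -> 0 < h^`() x.
    rewrite in_itv /= derive1E => /andP[x_gt0 x_lt]; have [_ ->] := dh x.
    by apply: h'_pos; rewrite x_gt0 /=; lra.
  have := @gtr0_derive1_lt_cc R h 0 (e / 2) (fun x _ => h_derivable x) h'_pos_itv
    (continuous_subspaceT h_cont).
  by apply; rewrite ?in_itv /= ?lexx ?(ltW e2_gt0).
by have := h_max (e / 2); rewrite leNgt h_incr.
Qed.

Lemma second_derivative_ge0_at_min (h h' : R -> R) (d : R) :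
  (forall t, is_derive t (1 : R) h (h' t)) -> is_derive (0 : R) (1 : R) h' d ->
  (forall t, h 0 <= h t) -> 0 <= d.
Proof.
move=> dh dh' h_min.
have dNh t : is_derive t (1 : R) (fun t => - h t) (- h' t).
  by have dNh := is_deriveN (dh t); exact: dNh.
have dNh' : is_derive (0 : R) (1 : R) (fun t => - h' t) (- d).
  by have dNh' := is_deriveN dh'; exact: dNh'.
by rewrite -oppr_le0; apply: (second_derivative_le0_at_max dNh dNh') => t; rewrite lerN2.
Qed.

End SecondDerivativeTest.

Section DerivativeAlongLines.
Variables (R : realType) (m : nat).
Implicit Types (f : 'rV[R]_m -> R) (a v : 'rV[R]_m) (t : R).

Let line_quotient f a v t :
  (fun h : R => h^-1 *: (((fun s : R => f (a + s *: v)) \o shift t) (h *: 1)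
                          - f (a + t *: v)))
  = (fun h : R => h^-1 *: ((f \o shift (a + t *: v)) (h *: v) - f (a + t *: v))).
Proof.
apply: funext => h /=; congr (_ *: (f _ - _)).
by rewrite scaler1 scalerDl addrC -addrA [_ + t *: v]addrC addrA.
Qed.

Lemma derive_line f a v t :
  'D_1 (fun s : R => f (a + s *: v)) t = 'D_v f (a + t *: v).
Proof. by rewrite /derive line_quotient. Qed.

Lemma is_derive_line f a v t : derivable f (a + t *: v) v ->
  is_derive t (1 : R) (fun s : R => f (a + s *: v)) ('D_v f (a + t *: v)).
Proof.
by move=> df; apply: DeriveDef; [rewrite /derivable line_quotient | exact: derive_line].
Qed.

End DerivativeAlongLines.

Section CoordinateSecondDerivative.
Variables (R : realType) (n : nat) (phi : 'rV[R]_n -> R) (i : 'I_n).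
Hypotheses (phi_derivable : forall x, derivable phi x (ev R i))
           (pd_phi_derivable : forall x, derivable (pd i phi) x (ev R i)).

Let is_derive_coordinate_line x0 t :
  is_derive t (1 : R) (fun s => phi (x0 + s *: ev R i)) (pd i phi (x0 + t *: ev R i)).
Proof. exact: is_derive_line. Qed.

Let is_derive2_coordinate_line x0 :
  is_derive (0 : R) (1 : R) (fun s => pd i phi (x0 + s *: ev R i)) (pd i (pd i phi) x0).
Proof.
have := @is_derive_line R n (pd i phi) x0 (ev R i) 0.
by rewrite scale0r addr0; apply.
Qed.

Lemma pd2_le0_at_max xM : (forall y, phi y <= phi xM) -> pd i (pd i phi) xM <= 0.
Proof.
move=> phi_max.
apply: (second_derivative_le0_at_max (is_derive_coordinate_line xM)
         (is_derive2_coordinate_line xM)).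
by move=> t; rewrite scale0r addr0.
Qed.

Lemma pd2_ge0_at_min xm : (forall y, phi xm <= phi y) -> 0 <= pd i (pd i phi) xm.
Proof.
move=> phi_min.
apply: (second_derivative_ge0_at_min (is_derive_coordinate_line xm)
         (is_derive2_coordinate_line xm)).
by move=> t; rewrite scale0r addr0.
Qed.

End CoordinateSecondDerivative.

Lemma pd_cst (R : realType) n (i : 'I_n) (f : 'rV[R]_n -> R) x :
  (forall y z, f y = f z) -> pd i f x = 0.
Proof.
move=> f_cst; rewrite /pd (_ : f = cst (f 0)); first exact: derive_cst.
by apply: funext => y; apply: f_cst.
Qed.

Section ConstantMetric.
Variables (R : realType) (n : nat) (g : tensor_field R n).
Hypothesis g_cst : forall x y, g x = g y.

Lemma christoffel_cst k i j x : christoffel g k i j x = 0.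
Proof.
rewrite /christoffel big1 // => m _.
by rewrite !pd_cst ?addr0 ?subr0 ?mulr0 // => y z; rewrite (g_cst y z).
Qed.

Lemma scalar_curv_cst x : scalar_curv g x = 0.
Proof.
rewrite /scalar_curv big1 // => i _; rewrite big1 // => j _.
rewrite /ricci big1 => [|k _]; last first.
  by rewrite !pd_cst ?subrr // => y z; rewrite !christoffel_cst.
rewrite big1 => [|k _]; first by rewrite addr0 mulr0.
by rewrite big1 // => m _; rewrite !christoffel_cst !mul0r subrr.
Qed.

Lemma laplacian_cst phi x :
  laplacian g phi x = \sum_i \sum_j ginv g x i j * pd i (pd j phi) x.
Proof.
apply: eq_bigr => i _; apply: eq_bigr => j _.
by rewrite big1 ?subr0 // => k _; rewrite christoffel_cst mul0r.
Qed.

End ConstantMetric.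

Lemma sum_supported1 (R : realType) n (F : 'I_n -> R) i :
  (forall k, k != i -> F k = 0) -> \sum_k F k = F i.
Proof. by move=> F0; rewrite (bigD1 i) //= big1 ?addr0. Qed.
Arguments sum_supported1 {R n F} i.

Section FlatMetric.
Variables (R : realType) (n : nat) (l : 'I_n -> R).
Hypothesis l_neq0 : forall k, l k != 0.

Lemma ginv_g_len x i j : ginv (g_len l) x i j = if i == j then (l i ^+ 2)^-1 else 0.
Proof.
pose D : 'M[R]_n := \matrix_(i, j) (if i == j then (l i ^+ 2)^-1 else 0).
have gD : g_len l x *m D = 1%:M.
  apply/matrixP => i1 i2; rewrite !mxE (sum_supported1 i1) => [|k ki1]; last first.
    by rewrite !mxE eq_sym (negbTE ki1) mul0r.
  rewrite !mxE eqxx; case: eqVneq => [->|_]; last by rewrite mulr0.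
  by rewrite mulfV // expf_neq0.
have [g_unit _] := mulmx1_unit gD.
by rewrite /ginv -[invmx _]mulmx1 -gD mulmxA mulVmx // mul1mx mxE.
Qed.

Lemma laplacian_g_len phi x :
  laplacian (g_len l) phi x = \sum_i (l i ^+ 2)^-1 * pd i (pd i phi) x.
Proof.
rewrite laplacian_cst //; apply: eq_bigr => i _.
rewrite (sum_supported1 i) => [|j ji]; first by rewrite ginv_g_len eqxx.
by rewrite ginv_g_len eq_sym (negbTE ji) mul0r.
Qed.

Lemma tnorm2_sigma_bl (mu : R) (b : 'I_n -> R) x :
  tnorm2 (g_len l) (fun x => mu *: sigma_bl b l x) x = mu ^+ 2 * \sum_k b k ^+ 2.
Proof.
rewrite /tnorm2 mulr_sumr; apply: eq_bigr => i _.
have diag_only j k m : k != i \/ m != j ->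
    ginv (g_len l) x i k * ginv (g_len l) x j m = 0.
  case=> [ki|mj]; rewrite !ginv_g_len.
    by rewrite [i == k]eq_sym (negbTE ki) mul0r.
  by rewrite [j == m]eq_sym (negbTE mj) mulr0.
rewrite (sum_supported1 i) => [|j ji]; last first.
  rewrite (sum_supported1 i) => [|k ki]; last first.
    by rewrite big1 // => m _; rewrite diag_only ?mul0r //; left.
  rewrite (sum_supported1 j) => [|m mj]; last by rewrite diag_only ?mul0r //; right.
  by rewrite !mxE eq_sym (negbTE ji) !mulr0.
rewrite (sum_supported1 i) => [|k ki]; last first.
  by rewrite big1 // => m _; rewrite diag_only ?mul0r //; left.
rewrite (sum_supported1 i) => [|m mi]; last by rewrite diag_only ?mul0r //; right.
by rewrite !ginv_g_len !mxE eqxx; field; exact: l_neq0.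
Qed.

End FlatMetric.

Section Exponents.
Variables (R : realType) (n : nat).
Hypothesis n_ge3 : (3 <= n)%N.

Let n_ge3R : (3 : R) <= n%:R. Proof. by rewrite (ler_nat R 3). Qed.

Lemma qexp_gt0 : 0 < qexp R n.
Proof. by have := n_ge3R; rewrite /qexp => ?; rewrite divr_gt0 //; lra. Qed.

Lemma kappa_gt0 : 0 < kappa R n.
Proof. by have := n_ge3R; rewrite /kappa => ?; rewrite divr_gt0 //; lra. Qed.

End Exponents.

Lemma gt0_powR_le_cancel (R : realType) (r x y : R) : 0 < r -> 0 <= x -> 0 <= y ->
  x `^ r <= y `^ r -> x <= y.
Proof.
move=> r_gt0 x_ge0 y_ge0; rewrite !leNgt; apply: contra => yx.
by apply: (gt0_ltr_powR r_gt0); rewrite ?nnegrE.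
Qed.

Lemma torus_C2_cst (R : realType) n (c : R) : torus_C2 (fun _ : 'rV[R]_n => c).
Proof.
have pd_c i : pd i (fun _ : 'rV[R]_n => c) = fun _ => 0 by apply: funext => x; rewrite pd_cst.
split=> //; split; first by move=> x; exact: cst_continuous.
split; first by move=> i x; exact: derivable_cst.
split; first by move=> i x; rewrite pd_c; exact: cst_continuous.
split; first by move=> i j x; rewrite pd_c; exact: derivable_cst.
by move=> i j x; rewrite !pd_c; exact: cst_continuous.
Qed.

Section FlatLichnerowicz.
Variables (R : realType) (n : nat) (l b : 'I_n -> R) (mu tau0 : R).
Hypotheses (l_gt0 : forall k, 0 < l k) (b_norm : \sum_k b k ^+ 2 = kappa R n)
           (tau0_neq0 : tau0 != 0).
Let q := qexp R n.
Let sig x := mu *: sigma_bl b l x.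

Lemma lichnerowicz_g_len phi : (forall x, 0 < phi x) ->
  lichnerowicz (g_len l) sig tau0 phi <->
  forall x, 2 * kappa R n * q * \sum_i (l i ^+ 2)^-1 * pd i (pd i phi) x
    = kappa R n * tau0 ^+ 2 * phi x `^ (- q - 1) * (phi x `^ (2 * q) - (mu / tau0) ^+ 2).
Proof.
move=> phi_gt0.
have l_neq0 k : l k != 0 by rewrite gt_eqF.
have split_pow x : phi x `^ (q - 1) = phi x `^ (- q - 1) * phi x `^ (2 * q).
  by rewrite -powRD ?(gt_eqF (phi_gt0 x)) ?implybT //; congr (_ `^ _); ring.
suff lhsE x :
    - (2 * kappa R n * q) * laplacian (g_len l) phi x + scalar_curv (g_len l) x * phi x
    - tnorm2 (g_len l) sig x * phi x `^ (- q - 1) + kappa R n * tau0 ^+ 2 * phi x `^ (q - 1)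
  = kappa R n * tau0 ^+ 2 * phi x `^ (- q - 1) * (phi x `^ (2 * q) - (mu / tau0) ^+ 2)
    - 2 * kappa R n * q * \sum_i (l i ^+ 2)^-1 * pd i (pd i phi) x.
  split=> eqn x; last by rewrite lhsE eqn subrr.
  by apply/esym/eqP; rewrite -subr_eq0 -lhsE (eqn x).
rewrite laplacian_g_len // scalar_curv_cst // tnorm2_sigma_bl // b_norm split_pow.
by field.
Qed.

Variable c : R.
Hypotheses (c_gt0 : 0 < c) (c_pow : c `^ (2 * q) = (mu / tau0) ^+ 2).

Lemma conformal_factor_cst : conformal_factor (g_len l) sig tau0 (fun _ => c).
Proof.
split=> //; first exact: torus_C2_cst.
apply/lichnerowicz_g_len => // x; rewrite c_pow subrr mulr0 big1 ?mulr0 // => i _.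
by rewrite pd_cst ?mulr0 // => y z; rewrite !pd_cst.
Qed.

Lemma conformal_factor_g_len_eq_cst phi : (3 <= n)%N ->
  conformal_factor (g_len l) sig tau0 phi -> phi = fun _ => c.
Proof.
move=> n_ge3 [[phi_per [phi_cont [phi_d1 [_ [phi_d2 _]]]]] phi_gt0].
move=> /(lichnerowicz_g_len phi_gt0) phi_eqn.
pose lap x := \sum_i (l i ^+ 2)^-1 * pd i (pd i phi) x.
have [lap_le0_le lap_ge0_ge] : (forall x, lap x <= 0 -> phi x <= c) /\
                               (forall x, 0 <= lap x -> c <= phi x).
  have q_gt0 := qexp_gt0 R n_ge3; have k_gt0 := kappa_gt0 R n_ge3.
  have coef_gt0 : 0 < 2 * kappa R n * q by apply: mulr_gt0 => //; apply: mulr_gt0.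
  have weight_gt0 x : 0 < kappa R n * tau0 ^+ 2 * phi x `^ (- q - 1).
    by apply: mulr_gt0; [apply: mulr_gt0; rewrite ?exprn_even_gt0 | apply: powR_gt0].
  have le_cancel x y : 0 <= x -> 0 <= y -> x `^ (2 * q) <= y `^ (2 * q) -> x <= y.
    by apply: gt0_powR_le_cancel; apply: mulr_gt0.
  split=> x lap_sign; apply: le_cancel; rewrite ?(ltW c_gt0) ?(ltW (phi_gt0 x)) // c_pow.
    by rewrite -subr_le0 -(pmulr_rle0 _ (weight_gt0 x)) -phi_eqn pmulr_rle0.
  by rewrite -subr_ge0 -(pmulr_rge0 _ (weight_gt0 x)) -phi_eqn pmulr_rge0.
have [xM phi_max] := periodic_continuous_max phi_per phi_cont.
have [xm phi_min] : exists xm, forall y, phi xm <= phi y.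
  have [xm Nphi_max] := @periodic_continuous_max R n (fun x => - phi x)
    (fun x i => congr1 -%R (phi_per x i)) (fun x => continuousN (phi_cont x)).
  by exists xm => y; rewrite -lerN2 Nphi_max.
have le_c : phi xM <= c.
  apply: lap_le0_le; apply: sumr_le0 => i _.
  by rewrite pmulr_rle0 ?invr_gt0 ?exprn_gt0 // pd2_le0_at_max.
have ge_c : c <= phi xm.
  apply: lap_ge0_ge; apply: sumr_ge0 => i _.
  by rewrite pmulr_rge0 ?invr_gt0 ?exprn_gt0 // pd2_ge0_at_min.
apply: funext => y; apply/eqP; rewrite eq_le.
by rewrite (le_trans (phi_max y) le_c) (le_trans ge_c (phi_min y)).
Qed.

End FlatLichnerowicz.

Lemma powR_sqr (R : realType) (x r : R) : 0 <= x -> (x `^ r) ^+ 2 = x `^ (2 * r).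
Proof. by move=> x_ge0; rewrite -powR_mulrn ?powR_ge0 // -powRrM mulrC. Qed.

Lemma is_derive_abs_powR (R : realType) (t r : R) : t != 0 ->
  is_derive t (1 : R) (fun u : R => `|u| `^ r) (r / t * `|t| `^ r).
Proof.
move=> t_neq0; set e := Num.sg t.
have et : e * t = `|t| by rewrite normrEsg.
have et_gt0 : 0 < e * t by rewrite et normr_gt0.
have d_pow : is_derive (e * t) (1 : R) (@powR R ^~ r) (r * (e * t) `^ (r - 1)).
  apply: DeriveDef; first by apply: derivable_powR; rewrite in_itv /= et_gt0.
  by rewrite -derive1E powR_derive1 // in_itv /= et_gt0.
have d_lin : is_derive t (1 : R) (fun u : R => e * u) (e * 1).
  by apply: is_deriveZ.
have e_norm : `|e| = 1 by rewrite normr_sg t_neq0.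
have near_abs : \forall u \near t, e * u = `|u|.
  apply/nbhs_ballP; exists `|t|; first by rewrite /= normr_gt0.
  move=> u /=; rewrite /ball /= => tu_lt.
  have : e * (t - u) <= `|t - u| by rewrite (le_trans (ler_norm _)) // normrM e_norm mul1r.
  rewrite mulrBr et => eu_gt0.
  by rewrite -[LHS]gtr0_norm ?normrM ?e_norm ?mul1r //; lra.
have := is_derive1_comp d_pow d_lin; rewrite mulr1 et => d_abs.
have -> : r / t * `|t| `^ r = r * `|t| `^ (r - 1) * e.
  rewrite powRD ?normr_eq0 ?t_neq0 ?implybT // powR_inv1 // -et.
  by field; rewrite t_neq0 /e sgr_eq0 t_neq0.
by apply: (near_eq_is_derive _ d_abs); apply: filterS near_abs => u /= ->.
Qed.

Lemma st_point_time (R : realType) n (t : R) (x : 'rV[R]_n) : st_point t x 0 0 = t.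
Proof. by rewrite mxE unlift_none. Qed.

Lemma g_len_scale (R : realType) n (r : R) (l : 'I_n -> R) x :
  g_len (fun k => r * l k) x = r ^+ 2 *: g_len l x.
Proof.
apply/matrixP => i j; rewrite !mxE.
by case: eqP => _; rewrite ?exprMn ?mulr0.
Qed.

Section KasnerSlices.
Variables (R : realType) (n : nat) (a lbar : 'I_n -> R).
Let G := kasner_metric a lbar.
Implicit Types (p : 'rV[R]_n.+1) (j k : 'I_n).

Lemma kasner_metric_space p j k :
  G p (sidx j) (sidx k) = if j == k then `|p 0 0| `^ (2 * a j) * lbar j ^+ 2 else 0.
Proof. by rewrite mxE (inj_eq lift_inj) liftK; case: eqP. Qed.

Lemma kasner_metric_time_space p k : G p ord0 (sidx k) = 0.
Proof. by rewrite mxE (negbTE (neq_lift _ _)). Qed.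

Lemma pd_time_kasner_metric p j : p 0 0 != 0 ->
  pd ord0 (fun y => G y (sidx j) (sidx j)) p = 2 * a j / p 0 0 * G p (sidx j) (sidx j).
Proof.
move=> p_time_neq0; rewrite /pd.
have := derive_line (fun y => G y (sidx j) (sidx j)) p (ev R ord0) 0.
rewrite scale0r addr0 => <-.
have -> : (fun s : R => G (p + s *: ev R ord0) (sidx j) (sidx j))
        = (fun u : R => lbar j ^+ 2 * `|u| `^ (2 * a j)) \o (fun s => p 0 0 + s).
  by apply: funext => s; rewrite /= kasner_metric_space eqxx !mxE eqxx mulr1 mulrC.
have d_shift : is_derive (0 : R) (1 : R) (fun s : R => p 0 0 + s) 1.
  have := is_deriveD (is_derive_cst (p 0 0) (0 : R) (1 : R)) (is_derive_id (0 : R) (1 : R)).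
  by rewrite add0r.
have d_abs := is_derive_abs_powR (2 * a j) p_time_neq0.
have d_scaled : is_derive (p 0 0 + 0) (1 : R)
    (lbar j ^+ 2 \*: (fun u : R => `|u| `^ (2 * a j)))
    (lbar j ^+ 2 *: (2 * a j / p 0 0 * `|p 0 0| `^ (2 * a j))).
  by rewrite addr0; exact: is_deriveZ.
rewrite (@derive_val _ _ _ _ _ _ _ (is_derive1_comp d_scaled d_shift)).
by rewrite kasner_metric_space eqxx /GRing.scale /= mulr1; ring.
Qed.

Lemma slice_metric_kasner t : slice_metric G t = g_len (fun k => `|t| `^ a k * lbar k).
Proof.
apply: funext => x; apply/matrixP => j k.
rewrite [LHS]mxE kasner_metric_space st_point_time mxE.
by case: eqP => [->|//]; rewrite exprMn powR_sqr.
Qed.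

Lemma slice_sff_kasner t x : t != 0 ->
  slice_sff G t x = \matrix_(j, k) (a j / t * slice_metric G t x j k).
Proof.
move=> t_neq0; apply/matrixP => j k.
rewrite [LHS]mxE [RHS]mxE [slice_metric _ _ _ _ _]mxE /christoffel1.
have time_space_cst i m : pd i (fun y => G y ord0 (sidx m)) (st_point t x) = 0.
  by apply: pd_cst => y z; rewrite !kasner_metric_time_space.
rewrite !time_space_cst add0r sub0r; case: (eqVneq j k) => [<-|jk].
  by rewrite pd_time_kasner_metric st_point_time //; field.
rewrite pd_cst => [|y z]; last by rewrite !kasner_metric_space (negbTE jk).
by rewrite kasner_metric_space (negbTE jk) mulr0 oppr0 mul0r oppr0.
Qed.

End KasnerSlices.

Lemma slice_metric_kasner_rescaled (R : realType) n (a l : 'I_n -> R) (t C : R) : t != 0 ->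
  slice_metric (kasner_metric a (fun k => `|t| `^ (- a k) * C * l k)) t
  = fun x => C ^+ 2 *: g_len l x.
Proof.
move=> t_neq0; rewrite slice_metric_kasner; apply: funext => x; rewrite -g_len_scale.
congr (g_len _ x); apply: funext => k; rewrite !mulrA -powRD ?subrr ?powRr0 ?mul1r //.
by rewrite normr_eq0 t_neq0 implybT.
Qed.

Lemma kasner_exponents_offset (R : realType) n (b : 'I_n -> R) (s : R) :
  (0 < n)%N -> offset_kasner b -> s ^+ 2 = 1 ->
  kasner_exponents (fun k => s * b k + n%:R^-1).
Proof.
move=> n_gt0 [b_sum b_norm] s2; have n_neq0 : n%:R != 0 :> R by rewrite pnatr_eq0 -lt0n.
split.
  rewrite big_split /= -mulr_sumr b_sum mulr0 add0r sumr_const card_ord.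
  by rewrite -[_ *+ n]mulr_natl mulfV.
have -> : \sum_k (s * b k + n%:R^-1) ^+ 2
    = s ^+ 2 * \sum_k b k ^+ 2 + 2 * s / n%:R * \sum_k b k + \sum_(k < n) (n%:R ^+ 2)^-1.
  by rewrite !mulr_sumr -!big_split /=; apply: eq_bigr => k _; field.
rewrite s2 b_norm b_sum sumr_const card_ord -[_ *+ n]mulr_natl /kappa.
by field.
Qed.

Lemma kasner_domain_inv (R : realType) (tau0 : R) : tau0 != 0 ->
  kasner_domain (0 < tau0) tau0^-1.
Proof.
rewrite /kasner_domain; case: ifP => [|/negbT]; first by rewrite invr_gt0.
by rewrite -leNgt invr_lt0 lt_neqAle => -> ->.
Qed.

Lemma sign_mul_norm_div (R : realType) (mu tau0 : R) : tau0 != 0 ->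
  (if (0 < mu) == (0 < tau0) then 1 else -1) * tau0 * `|mu / tau0| = mu.
Proof.
move=> tau0_neq0; rewrite normrM normrV ?unitfE //.
case: ltrgt0P => [_|_|->]; last by rewrite mul0r mulr0.
all: case: (ltrgt0P tau0) => [_|_|t0] /=; first [by field | by rewrite t0 eqxx in tau0_neq0].
Qed.

Theorem proposition4p1 (R : realType) (n : nat) (hn : (3 <= n)%N)
  (l b : 'I_n -> R) (mu tau0 : R)
  (hl : forall k, 0 < l k) (hb : offset_kasner b)
  (hmu : mu != 0) (htau : tau0 != 0) :
  let t0 := tau0^-1 in
  let expanding := 0 < tau0 in
  let s : R := if (0 < mu) == (0 < tau0) then 1 else -1 in
  let a := fun k => s * b k + n%:R^-1 in
  let c := `|mu / tau0| `^ (qexp R n)^-1 in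
  let lbar := fun k => `|t0| `^ (- a k) * c `^ (qexp R n / 2 - 1) * l k in
  let G := kasner_metric a lbar in
  let g := g_len l in
  let sig := fun x => mu *: sigma_bl b l x in
  kasner_exponents a /\ kasner_domain expanding t0 /\
  [/\
      (exists phi, conformal_factor g sig tau0 phi),
      (forall phi, conformal_factor g sig tau0 phi ->
         generated_solution g sig tau0 phi = cauchy_data G t0),
      slice_metric G t0 = (fun x => c `^ (qexp R n - 2) *: g x)
    & slice_metric G (Num.sg t0) = g_len lbar].
Proof.
move=> t0 expanding s a c lbar G g sig.
have n_gt0 : (0 < n)%N by rewrite (leq_trans _ hn).
have t0_neq0 : t0 != 0 by rewrite invr_eq0.
have c_gt0 : 0 < c by rewrite powR_gt0 // normr_gt0 mulf_neq0 ?invr_eq0.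
have c_q : c `^ qexp R n = `|mu / tau0|.
  by rewrite -powRrM mulVf ?gt_eqF ?qexp_gt0 // powRr1.
have c_2q : c `^ (2 * qexp R n) = (mu / tau0) ^+ 2.
  by rewrite mulrC powRrM c_q (@powR_mulrn _ _ 2) // real_normK ?num_real.
have slice_t0 : slice_metric G t0 = fun x => c `^ (qexp R n - 2) *: g x.
  rewrite (slice_metric_kasner_rescaled a l (c `^ (qexp R n / 2 - 1)) t0_neq0).
  rewrite powR_sqr ?powR_ge0 //.
  by have -> : 2 * (qexp R n / 2 - 1) = qexp R n - 2 by field.
split; first by apply: kasner_exponents_offset; rewrite // /s; case: ifP; rewrite ?sqrrN expr1n.
split; first exact: kasner_domain_inv.
split.
- by exists (fun _ => c); apply: (conformal_factor_cst hl hb.2 htau c_gt0 c_2q).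
- move=> phi /(conformal_factor_g_len_eq_cst hl hb.2 htau c_gt0 c_2q hn) ->.
  rewrite /generated_solution /cauchy_data slice_t0; congr pair; apply: funext => x.
  rewrite slice_sff_kasner // slice_t0; apply/matrixP => j k; rewrite !mxE.
  case: eqP => _; last by rewrite !mulr0 addr0.
  rewrite invrK /a -(sign_mul_norm_div mu htau) -/s -c_q.
  rewrite powRD ?(gt_eqF c_gt0) ?implybT // (@powR_invn _ _ 2) ?(ltW c_gt0) //.
  by field; rewrite gt_eqF //= pnatr_eq0 -lt0n.
- exact: slice_t0.
- by rewrite slice_metric_kasner normr_sg t0_neq0 powR1; under eq_fun do rewrite mul1r.
Qed.
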